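(* Let $\gamma$ be a consistent family of grafts for a tree $\mathcal T$ and let $B$ be a branch in $\mathcal H=\mathrm{hybr}(\mathcal T,\gamma)$. (a) If $\mathcal G\in\gamma$ and $B\cap\mathrm{nodes}\,\mathcal G\ne\emptyset$, then $B\cap\mathrm{nodes}\,\mathcal G$ is a branch in $\mathcal G$. (b) If every graft in $\gamma$ has bounded chains, then $B\cap\mathrm{supp}(\mathcal T,\gamma)$ is cofinal in $B$ with respect to $\mathcal H$, i.e. for every $b\in B$ there is $c\in B\cap\mathrm{supp}(\mathcal T,\gamma)$ with $b\le_{\mathcal H}c$.
   Context: A tree is a pair $(Q,<)$ with $<$ irreflexive transitive and each set of predecessors well-ordered; a chain is a set of pairwise comparable nodes, a branch an inclusion-maximal chain; the tree has bounded chains if every nonempty chain $C$ has a node $z$ with $c\le z$ for all $c\in C$; $\max\mathcal T$ = maximal nodes; $A{\downarrow}_{\mathcal T}=\{v:\exists a\in A\ a\le_{\mathcal T}v\}$; $x\parallel_{\mathcal T}y$ means incomparable; for an antichain $A$ and $x\in A{\downarrow}_{\mathcal T}$, $\mathrm{root}_{\mathcal T}(x,A)$ is the unique $r\in A$ with $r\le_{\mathcal T}x$. A graft for $\mathcal T$ is a tree $\mathcal G$ with more than one node, least node $0_{\mathcal G}\in\mathrm{nodes}\,\mathcal T$, with $\max\mathcal G\subseteq\{v\in\mathrm{nodes}\,\mathcal T:v>_{\mathcal T}0_{\mathcal G}\}$ an antichain in $\mathcal T$, and $\mathrm{impl}\,\mathcal G:=\mathrm{nodes}\,\mathcal G\setminus(\{0_{\mathcal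 G}\}\cup\max\mathcal G)$ disjoint from $\mathrm{nodes}\,\mathcal T$; $\mathrm{expl}(\mathcal T,\mathcal G)=\{v:v>_{\mathcal T}0_{\mathcal G}\}\setminus(\max\mathcal G){\downarrow}_{\mathcal T}$. $\gamma$ is a consistent family of grafts for $\mathcal T$ if its members are grafts for $\mathcal T$ with pairwise disjoint implants and for distinct $\mathcal D,\mathcal E\in\gamma$: $0_{\mathcal D}\parallel_{\mathcal T}0_{\mathcal E}$ or $0_{\mathcal D}\in(\max\mathcal E){\downarrow}_{\mathcal T}$ or $0_{\mathcal E}\in(\max\mathcal D){\downarrow}_{\mathcal T}$. $\mathrm{supp}(\mathcal T,\gamma)=\mathrm{nodes}\,\mathcal T\setminus\bigcup_{\mathcal G\in\gamma}\mathrm{expl}(\mathcal T,\mathcal G)$. $\mathrm{hybr}(\mathcal T,\gamma)=(H,<)$ where $H=\mathrm{supp}(\mathcal T,\gamma)\cup\bigcup_{\mathcal G\in\gamma}\mathrm{impl}\,\mathcal G$ and $x<y$ iff: (b1) $x,y\in\mathrm{supp}$, $x<_{\mathcal T}y$; or (b2) $x,y\in\mathrm{impl}\,\mathcal G$, $x<_{\mathcal G}y$ for some $\mathcal G\in\gamma$; or (b3) $x\in\mathrm{supp}$, $y\in\mathrm{impl}\,\mathcal G$, $x\le_{\mathcal T}0_{\mathcal G}$; or (b4) $x\in\mathrm{impl}\,\mathcal G$, $y\in\mathrm{supp}\cap(\max\mathcal G){\downarrow}_{\mathcal T}$, $x<_{\mathcal G}\mathrm{root}_{\mathcal T}(y,\max\mathcal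 G)$; or (b5) for distinct $\mathcal D,\mathcal E\in\gamma$: $x\in\mathrm{impl}\,\mathcal D$, $y\in\mathrm{impl}\,\mathcal E$, $0_{\mathcal E}\in(\max\mathcal D){\downarrow}_{\mathcal T}$, $x<_{\mathcal D}\mathrm{root}_{\mathcal T}(0_{\mathcal E},\max\mathcal D)$. It is a tree. *)

Set Implicit Arguments.

Section Trees.
Variable U : Type.

Record tree := Tree { nodes : U -> Prop; tlt : U -> U -> Prop }.

Definition tle (T : tree) (x y : U) : Prop :=
  (x = y /\ nodes T x) \/ tlt T x y.

Definition is_tree (T : tree) : Prop :=
  (forall x y, tlt T x y -> nodes T x /\ nodes T y) /\
  (forall x, ~ tlt T x x) /\
  (forall x y z, tlt T x y -> tlt T y z -> tlt T x z) /\
  (forall x, nodes T x -> forall S : U -> Prop,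
      (forall s, S s -> tlt T s x) -> (exists s, S s) ->
      exists m, S m /\ forall s, S s -> tle T m s).

Definition comparable (T : tree) (x y : U) : Prop := tle T x y \/ tle T y x.
Definition incomparable (T : tree) (x y : U) : Prop := ~ comparable T x y.

Definition chain (T : tree) (C : U -> Prop) : Prop :=
  (forall x, C x -> nodes T x) /\ (forall x y, C x -> C y -> comparable T x y).

Definition branch (T : tree) (B : U -> Prop) : Prop :=
  chain T B /\ forall C, chain T C -> (forall x, B x -> C x) -> forall x, C x -> B x.

Definition bounded_chains (T : tree) : Prop :=
  forall C, chain T C -> (exists c, C c) ->
    exists z, nodes T z /\ forall c, C c -> tle T c z.

Definition maxn (T : tree) (v : U) : Prop := nodes T v /\ ~ exists w, tlt T v w.

Definition least (T : tree) (z : U) : Prop :=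
  nodes T z /\ forall v, nodes T v -> tle T z v.

Definition down (T : tree) (A : U -> Prop) (v : U) : Prop :=
  exists a, A a /\ tle T a v.

Definition antichain (T : tree) (A : U -> Prop) : Prop :=
  (forall x, A x -> nodes T x) /\
  (forall x y, A x -> A y -> x <> y -> incomparable T x y).

Definition impl (G : tree) (v : U) : Prop :=
  nodes G v /\ ~ least G v /\ ~ maxn G v.

Definition graft (T G : tree) : Prop :=
  is_tree G /\
  (exists a b, nodes G a /\ nodes G b /\ a <> b) /\
  (exists z, least G z /\ nodes T z /\
     (forall v, maxn G v -> nodes T v /\ tlt T z v)) /\
  antichain T (maxn G) /\
  (forall v, impl G v -> ~ nodes T v).

Definition expl (T G : tree) (v : U) : Prop :=
  exists z, least G z /\ tlt T z v /\ ~ down T (maxn G) v.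

(* gamma is given as an indexed family g : I -> tree *)
Definition consistent (T : tree) (I : Type) (g : I -> tree) : Prop :=
  (forall i, graft T (g i)) /\
  (forall i j, i <> j -> forall v, impl (g i) v -> ~ impl (g j) v) /\
  (forall i j, i <> j -> forall zi zj, least (g i) zi -> least (g j) zj ->
     incomparable T zi zj \/ down T (maxn (g j)) zi \/ down T (maxn (g i)) zj).

Definition supp (T : tree) (I : Type) (g : I -> tree) (v : U) : Prop :=
  nodes T v /\ ~ exists i, expl T (g i) v.

Definition hybr_nodes (T : tree) (I : Type) (g : I -> tree) (v : U) : Prop :=
  supp T g v \/ exists i, impl (g i) v.

(* root_T(y, A) = r  is expressed relationally: A r /\ r <=_T y *)
Definition hybr_lt (T : tree) (I : Type) (g : I -> tree) (x y : U) : Prop :=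
  (supp T g x /\ supp T g y /\ tlt T x y) \/
  (exists i, impl (g i) x /\ impl (g i) y /\ tlt (g i) x y) \/
  (exists i, supp T g x /\ impl (g i) y /\
     exists z, least (g i) z /\ tle T x z) \/
  (exists i, impl (g i) x /\ supp T g y /\ down T (maxn (g i)) y /\
     exists r, maxn (g i) r /\ tle T r y /\ tlt (g i) x r) \/
  (exists i j, i <> j /\ impl (g i) x /\ impl (g j) y /\
     exists zj, least (g j) zj /\ down T (maxn (g i)) zj /\
     exists r, maxn (g i) r /\ tle T r zj /\ tlt (g i) x r).

Definition hybr (T : tree) (I : Type) (g : I -> tree) : tree :=
  Tree (hybr_nodes T g) (hybr_lt T g).

End Trees.

From Stdlib Require Import Classical Relation_Definitions.
Set Implicit Arguments.
Unset Strict Implicit.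

(* The hybrid order is transitive and, like a tree order, has pairwise comparable
   predecessors: a predecessor of a node either lies in the implant of the same graft or
   lies under some node t of T (in T itself below t, or in an implant whose maximal node
   is below t), and any two nodes under a common t are comparable because consistency
   forces their grafts to be nested or disjoint along T.  Hence branches of the hybrid
   are downward closed.  On the nodes of one graft the hybrid order coincides with the
   graft order, and above a non-maximal node of a graft the hybrid only continues inside
   the implant or above a maximal node of the graft; this gives (a).  For (b), the trace
   of a branch on a graft with bounded chains has an upper bound, which is then a maximal
   node of the graft, hence a support node above the given node. *)

Section TreeOrder.
Variables (U : Type) (X : tree U).

Lemma tlt_tle x y : tlt X x y -> tle X x y.
Proof. intros; right; auto. Qed.

Lemma tle_refl x : nodes X x -> tle X x x.
Proof. intros; left; auto. Qed.

Lemma comparable_sym x y : comparable X x y -> comparable X y x.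
Proof. unfold comparable; tauto. Qed.

Lemma comparable_refl x : nodes X x -> comparable X x x.
Proof. intros; left; left; auto. Qed.

Lemma tlt_comparable x y : tlt X x y -> comparable X x y.
Proof. intros; left; right; auto. Qed.

Lemma tlt_comparable_r x y : tlt X y x -> comparable X x y.
Proof. intros; right; right; auto. Qed.

Section Transitive.
Hypothesis lt_trans : transitive U (tlt X).

Lemma tle_tlt_trans x y z : tle X x y -> tlt X y z -> tlt X x z.
Proof. intros [[e _]|h] h'; [subst; auto|eapply lt_trans; eauto]. Qed.

Lemma tlt_tle_trans x y z : tlt X x y -> tle X y z -> tlt X x z.
Proof. intros h [[e _]|h']; [subst; auto|eapply lt_trans; eauto]. Qed.

Lemma tle_trans x y z : tle X x y -> tle X y z -> tle X x z.
Proof. intros h [[e _]|h']; [subst; auto|right; eapply tle_tlt_trans; eauto]. Qed.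

End Transitive.

Section Tree.
Hypothesis HX : is_tree X.

Lemma tree_tlt_nodes x y : tlt X x y -> nodes X x /\ nodes X y.
Proof. apply (proj1 HX). Qed.

Lemma tree_tlt_irrefl x : ~ tlt X x x.
Proof. apply (proj1 (proj2 HX)). Qed.

Lemma tree_tlt_trans : transitive U (tlt X).
Proof. intros x y z; apply (proj1 (proj2 (proj2 HX))). Qed.

Lemma tle_tlt_false x y : tle X x y -> tlt X y x -> False.
Proof.
  intros h h'. apply (tree_tlt_irrefl (x := x)).
  exact (tle_tlt_trans tree_tlt_trans h h').
Qed.

Lemma tle_common_upper_comparable a b t : tle X a t -> tle X b t -> comparable X a b.
Proof.
  intros [[e _]|ha] hb; [subst; right; exact hb|].
  destruct hb as [[e _]|hb]; [subst; left; right; exact ha|].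
  destruct HX as [_ [_ [_ Hwo]]].
  destruct (Hwo t (proj2 (tree_tlt_nodes ha)) (fun s => s = a \/ s = b))
    as [m [[e|e] Hm]]; subst.
  - intros s [e|e]; subst; auto.
  - exists a; auto.
  - left; apply Hm; auto.
  - right; apply Hm; auto.
Qed.

Lemma least_unique z z' : least X z -> least X z' -> z = z'.
Proof.
  intros [Nz Hz] [Nz' Hz'].
  destruct (Hz z' Nz') as [[e _]|l]; [exact e|].
  exfalso; exact (tle_tlt_false (Hz' z Nz) l).
Qed.

End Tree.
End TreeOrder.

Section Branches.
Variables (U : Type) (X : tree U) (B : U -> Prop).
Hypothesis HB : branch X B.

Lemma branch_extend c : nodes X c -> (forall b, B b -> comparable X b c) -> B c.
Proof.
  intros Nc Hc. destruct HB as [[BN BC] BM].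
  apply (BM (fun v => B v \/ v = c)); [split| |]; auto.
  - intros v [Bv|e]; [auto|subst; auto].
  - intros x y [Bx|ex] [By|ey]; subst.
    + auto.
    + auto.
    + apply comparable_sym; auto.
    + apply comparable_refl; auto.
Qed.

Section DownClosed.
Hypothesis lt_nodes : forall x y, tlt X x y -> nodes X x.
Hypothesis lt_trans : transitive U (tlt X).
Hypothesis pred_comparable : forall x y w, tlt X x w -> tlt X y w -> comparable X x y.

Lemma branch_down_closed x y : B y -> tle X x y -> B x.
Proof.
  intros By Hxy. destruct HB as [[_ BC] _].
  apply branch_extend.
  - destruct Hxy as [[e Nx]|l]; [subst; auto|eapply lt_nodes; eauto].
  - intros b Bb. destruct (BC b y Bb By) as [[[e _]|Hby]|Hyb].
    + subst; right; exact Hxy.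
    + destruct Hxy as [[e _]|Hxy]; [subst; exact (tlt_comparable Hby)|].
      exact (pred_comparable Hby Hxy).
    + right; exact (tle_trans lt_trans Hxy Hyb).
Qed.

End DownClosed.

Lemma branch_upper_bound_maxn z : is_tree X -> nodes X z ->
  (forall b, B b -> tle X b z) -> B z /\ maxn X z.
Proof.
  intros HX Nz Hz.
  assert (Bz : B z) by (apply branch_extend; [|left; apply Hz]; auto).
  split; [exact Bz|split; [exact Nz|intros [w l]]].
  assert (Bw : B w).
  { apply branch_extend; [exact (proj2 (tree_tlt_nodes HX l))|].
    intros b Bb. left; right. exact (tle_tlt_trans (tree_tlt_trans HX) (Hz b Bb) l). }
  exact (tle_tlt_false HX (Hz w Bw) l).
Qed.

End Branches.

Section Hybrid.
Variables (U : Type) (T : tree U) (I : Type) (g : I -> tree U).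
Hypothesis HT : is_tree T.
Hypothesis Hc : consistent T g.

Notation S := (supp T g).
Notation H := (hybr T g).

Lemma graft_tree i : is_tree (g i).
Proof. exact (proj1 (proj1 Hc i)). Qed.

Lemma graft_least_exists i : exists z, least (g i) z.
Proof. destruct (proj1 Hc i) as [_ [_ [[z [Lz _]] _]]]; eauto. Qed.

Lemma graft_least_nodes i z : least (g i) z -> nodes T z.
Proof.
  intros Lz. destruct (proj1 Hc i) as [Hti [_ [[z0 [L0 [N0 _]]] _]]].
  rewrite (least_unique Hti Lz L0); exact N0.
Qed.

Lemma graft_maxn_above_least i z m : least (g i) z -> maxn (g i) m -> tlt T z m.
Proof.
  intros Lz Mm. destruct (proj1 Hc i) as [Hti [_ [[z0 [L0 [_ Hm]]] _]]].
  rewrite (least_unique Hti Lz L0); exact (proj2 (Hm m Mm)).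
Qed.

Lemma graft_maxn_nodes i m : maxn (g i) m -> nodes T m.
Proof.
  intros Mm. destruct (graft_least_exists i) as [z Lz].
  exact (proj2 (tree_tlt_nodes HT (graft_maxn_above_least Lz Mm))).
Qed.

Lemma graft_maxn_eq i m m' : maxn (g i) m -> maxn (g i) m' -> tle T m m' -> m = m'.
Proof.
  intros Mm Mm' Le. destruct (proj1 Hc i) as [_ [_ [_ [[_ Hanti] _]]]].
  apply NNPP; intros ne. apply (Hanti m m' Mm Mm' ne); left; exact Le.
Qed.

Lemma impl_not_nodes i v : impl (g i) v -> ~ nodes T v.
Proof. destruct (proj1 Hc i) as [_ [_ [_ [_ h]]]]; exact (h v). Qed.

Lemma impl_index_unique i j v : impl (g i) v -> impl (g j) v -> i = j.
Proof.
  intros h1 h2. apply NNPP; intros ne. exact (proj1 (proj2 Hc) i j ne v h1 h2).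
Qed.

Lemma least_tle_least_down i j zi zj : i <> j -> least (g i) zi -> least (g j) zj ->
  tle T zi zj -> down T (maxn (g i)) zj.
Proof.
  intros ne Li Lj Le.
  destruct (proj2 (proj2 Hc) i j ne zi zj Li Lj) as [h|[[a [Ma La]]|h]]; auto.
  - exfalso; apply h; left; exact Le.
  - exfalso. apply (tree_tlt_irrefl HT (x := a)).
    apply (tle_tlt_trans (tree_tlt_trans HT) La), (tle_tlt_trans (tree_tlt_trans HT) Le).
    exact (graft_maxn_above_least Lj Ma).
Qed.

Lemma graft_nodes_cases i v : nodes (g i) v ->
  least (g i) v \/ maxn (g i) v \/ impl (g i) v.
Proof.
  intros Nv. destruct (classic (least (g i) v)); auto.
  destruct (classic (maxn (g i) v)); auto. right; right; split; auto.
Qed.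

Lemma graft_node_in_T i v : nodes (g i) v -> nodes T v -> least (g i) v \/ maxn (g i) v.
Proof.
  intros Nv NTv. destruct (graft_nodes_cases Nv) as [h|[h|h]]; auto.
  exfalso; exact (impl_not_nodes h NTv).
Qed.

Lemma graft_node_impl_index i k v : nodes (g i) v -> impl (g k) v -> k = i.
Proof.
  intros Nv Iv. destruct (graft_nodes_cases Nv) as [h|[h|h]].
  - exfalso; exact (impl_not_nodes Iv (graft_least_nodes h)).
  - exfalso; exact (impl_not_nodes Iv (graft_maxn_nodes h)).
  - exact (impl_index_unique Iv h).
Qed.

Lemma maxn_supp i m : maxn (g i) m -> S m.
Proof.
  intros Mm. split; [exact (graft_maxn_nodes Mm)|intros [j [zj [Lj [Tzm ND]]]]].
  destruct (classic (i = j)) as [e|ne].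
  - subst. apply ND. exists m; split; [exact Mm|apply tle_refl, (graft_maxn_nodes Mm)].
  - destruct (graft_least_exists i) as [zi Li].
    destruct (tle_common_upper_comparable HT (tlt_tle (graft_maxn_above_least Li Mm))
      (tlt_tle Tzm)) as [h|h].
    + destruct (least_tle_least_down ne Li Lj h) as [a [Ma La]].
      assert (Lam : tlt T a m) by exact (tle_tlt_trans (tree_tlt_trans HT) La Tzm).
      rewrite (graft_maxn_eq Ma Mm (tlt_tle Lam)) in Lam.
      exact (tree_tlt_irrefl HT Lam).
    + destruct (least_tle_least_down (not_eq_sym ne) Lj Li h) as [a [Ma La]].
      apply ND. exists a; split; [exact Ma|right].
      exact (tle_tlt_trans (tree_tlt_trans HT) La (graft_maxn_above_least Li Mm)).
Qed.

Lemma least_supp i z : least (g i) z -> S z.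
Proof.
  intros Lz. split; [exact (graft_least_nodes Lz)|intros [j [zj [Lj [Tzz ND]]]]].
  destruct (classic (i = j)) as [e|ne].
  - subst. rewrite (least_unique (graft_tree j) Lz Lj) in Tzz.
    exact (tree_tlt_irrefl HT Tzz).
  - exact (ND (least_tle_least_down (not_eq_sym ne) Lj Lz (tlt_tle Tzz))).
Qed.

Lemma graft_nodes_hybr i v : nodes (g i) v -> nodes H v.
Proof.
  intros Nv. destruct (graft_nodes_cases Nv) as [h|[h|h]].
  - left; exact (least_supp h).
  - left; exact (maxn_supp h).
  - right; eauto.
Qed.

(* The five clauses (b1)-(b5) of the hybrid order, with the redundant [down] premise of
   (b4) and (b5) dropped. *)
Inductive hybr_lt_spec (x y : U) : Prop :=
| HltSupp : S x -> S y -> tlt T x y -> hybr_lt_spec x y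
| HltImpl i : impl (g i) x -> impl (g i) y -> tlt (g i) x y -> hybr_lt_spec x y
| HltSuppImpl i z : S x -> impl (g i) y -> least (g i) z -> tle T x z -> hybr_lt_spec x y
| HltImplSupp i r : impl (g i) x -> S y -> maxn (g i) r -> tle T r y ->
    tlt (g i) x r -> hybr_lt_spec x y
| HltImplImpl i j z r : i <> j -> impl (g i) x -> impl (g j) y -> least (g j) z ->
    maxn (g i) r -> tle T r z -> tlt (g i) x r -> hybr_lt_spec x y.

Lemma hybr_ltE x y : tlt H x y <-> hybr_lt_spec x y.
Proof.
  split.
  - intros [[? [? ?]]|[[i [? [? ?]]]|[[i [? [? [z [? ?]]]]]|
      [[i [? [? [_ [r [? [? ?]]]]]]]|[i [j [? [? [? [z [? [_ [r [? [? ?]]]]]]]]]]]]]]].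
    + eapply HltSupp; eauto.
    + eapply HltImpl; eauto.
    + eapply HltSuppImpl; eauto.
    + eapply HltImplSupp; eauto.
    + eapply HltImplImpl; eauto.
  - intros [? ? ?|i ? ? ?|i z ? ? ? ?|i r ? ? ? ? ?|i j z r ? ? ? ? ? ? ?].
    + left; auto.
    + right; left; eauto.
    + right; right; left; eauto 6.
    + right; right; right; left. exists i.
      split; [auto|split; [auto|split; [exists r; auto|exists r; auto]]].
    + right; right; right; right. exists i, j.
      split; [auto|split; [auto|split; [auto|exists z]]].
      split; [auto|split; [exists r; auto|exists r; auto]].
Qed.

Ltac supp_impl_absurd := match goal with
  | h : supp _ _ ?v, h' : impl _ ?v |- _ => exfalso; exact (impl_not_nodes h' (proj1 h))
  end.

Lemma hybr_lt_nodes x y : tlt H x y -> nodes H x /\ nodes H y.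
Proof.
  intros h. apply hybr_ltE in h.
  destruct h; split; solve [left; auto | right; eauto].
Qed.

Lemma hybr_lt_trans : transitive U (tlt H).
Proof.
  assert (Ttr := tree_tlt_trans HT).
  intros x y w h1 h2. apply hybr_ltE in h1, h2. apply hybr_ltE.
  destruct h1 as [Sx Sy l1|i Ix Iy l1|i z Sx Iy Lz l1|i r Ix Sy Mr lr l1|
                  i j z r ne Ix Iy Lz Mr lr l1];
  destruct h2 as [Sy' Sw l2|i' Iy' Iw l2|i' z' Sy' Iw Lz' l2|i' r' Iy' Sw Mr' lr' l2|
                  i' j' z' r' ne' Iy' Iw Lz' Mr' lr' l2];
  try supp_impl_absurd;
  try (pose proof (impl_index_unique Iy Iy') as e; subst i');
  try (pose proof (graft_maxn_above_least Lz Mr') as lzr).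
  - exact (HltSupp Sx Sw (Ttr _ _ _ l1 l2)).
  - exact (HltSuppImpl Sx Iw Lz' (tlt_tle (tlt_tle_trans Ttr l1 l2))).
  - exact (HltImpl Ix Iw (tree_tlt_trans (graft_tree i) l1 l2)).
  - exact (HltImplSupp Ix Sw Mr' lr' (tree_tlt_trans (graft_tree i) l1 l2)).
  - exact (HltImplImpl ne' Ix Iw Lz' Mr' lr' (tree_tlt_trans (graft_tree i) l1 l2)).
  - exact (HltSuppImpl Sx Iw Lz l1).
  - exact (HltSupp Sx Sw (tle_tlt_trans Ttr l1 (tlt_tle_trans Ttr lzr lr'))).
  - exact (HltSuppImpl Sx Iw Lz' (tlt_tle (tle_tlt_trans Ttr l1 (tlt_tle_trans Ttr lzr lr')))).
  - exact (HltImplSupp Ix Sw Mr (tlt_tle (tle_tlt_trans Ttr lr l2)) l1).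
  - destruct (classic (i = i')) as [e|ne]; [subst i'; exfalso|].
    + exact (tle_tlt_false HT (tle_trans Ttr lr l2) (graft_maxn_above_least Lz' Mr)).
    + exact (HltImplImpl ne Ix Iw Lz' Mr (tle_trans Ttr lr l2) l1).
  - exact (HltImplImpl ne Ix Iw Lz Mr lr l1).
  - exact (HltImplSupp Ix Sw Mr
      (tlt_tle (tle_tlt_trans Ttr lr (tlt_tle_trans Ttr lzr lr'))) l1).
  - assert (Le : tle T r z')
      by exact (tlt_tle (tle_tlt_trans Ttr lr (tlt_tle_trans Ttr lzr lr'))).
    destruct (classic (i = j')) as [e|ne2]; [subst j'; exfalso|].
    + exact (tle_tlt_false HT Le (graft_maxn_above_least Lz' Mr)).
    + exact (HltImplImpl ne2 Ix Iw Lz' Mr Le l1).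
Qed.

Lemma supp_tle_hybr x y : S x -> S y -> tle T x y -> tle H x y.
Proof.
  intros Sx Sy [[e _]|l]; [subst; left; split; [reflexivity|left; exact Sy]|].
  right; apply hybr_ltE; exact (HltSupp Sx Sy l).
Qed.

Lemma graft_lt_hybr i x y : tlt (g i) x y -> tlt H x y.
Proof.
  intros l. destruct (tree_tlt_nodes (graft_tree i) l) as [Nx Ny]. apply hybr_ltE.
  destruct (graft_nodes_cases Nx) as [Lx|[Mx|Ix]];
  [|exfalso; apply (proj2 Mx); eauto|];
  (destruct (graft_nodes_cases Ny) as [Ly|[My|Iy]];
   [exfalso; exact (tle_tlt_false (graft_tree i) (proj2 Ly x Nx) l)| |]).
  - exact (HltSupp (least_supp Lx) (maxn_supp My) (graft_maxn_above_least Lx My)).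
  - exact (HltSuppImpl (least_supp Lx) Iy Lx (tle_refl (graft_least_nodes Lx))).
  - exact (HltImplSupp Ix (maxn_supp My) My (tle_refl (graft_maxn_nodes My)) l).
  - exact (HltImpl Ix Iy l).
Qed.

Lemma graft_tle_hybr i x y : tle (g i) x y -> tle H x y.
Proof.
  intros [[e Nx]|l]; [subst; left; split; [reflexivity|exact (graft_nodes_hybr Nx)]|].
  right; exact (graft_lt_hybr l).
Qed.

Lemma graft_comparable_hybr i x y : comparable (g i) x y -> comparable H x y.
Proof. intros [h|h]; [left|right]; exact (graft_tle_hybr h). Qed.

Lemma maxn_hybr_lt_graft_false i m y : maxn (g i) m -> nodes (g i) y -> ~ tlt H m y.
Proof.
  intros Mm Ny h. apply hybr_ltE in h.
  destruct h as [_ Sy l|k Im _ _|k z _ Iy Lz Le|k r Im _ _ _ _|k j z r _ Im _ _ _ _ _];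
  try (exact (impl_not_nodes Im (graft_maxn_nodes Mm))).
  - destruct (graft_node_in_T Ny (proj1 Sy)) as [Ly|My].
    + exact (tle_tlt_false HT (tlt_tle l) (graft_maxn_above_least Ly Mm)).
    + rewrite (graft_maxn_eq Mm My (tlt_tle l)) in l. exact (tree_tlt_irrefl HT l).
  - rewrite (graft_node_impl_index Ny Iy) in Lz.
    exact (tle_tlt_false HT Le (graft_maxn_above_least Lz Mm)).
Qed.

Lemma impl_hybr_lt_graft i x y : impl (g i) x -> nodes (g i) y -> tlt H x y ->
  tlt (g i) x y.
Proof.
  intros Ix Ny h. apply hybr_ltE in h.
  destruct h as [Sx _ _|k Ix' _ l|k z Sx _ _ _|k r Ix' Sy Mr Lr l|k j z r ne Ix' Iy _ _ _ _];
  try supp_impl_absurd; rewrite (impl_index_unique Ix' Ix) in *.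
  - exact l.
  - destruct (graft_node_in_T Ny (proj1 Sy)) as [Ly|My].
    + exfalso; exact (tle_tlt_false HT Lr (graft_maxn_above_least Ly Mr)).
    + rewrite <- (graft_maxn_eq Mr My Lr); exact l.
  - exfalso; exact (ne (eq_sym (graft_node_impl_index Ny Iy))).
Qed.

Lemma hybr_tle_graft i x y : nodes (g i) x -> nodes (g i) y -> tle H x y ->
  tle (g i) x y.
Proof.
  intros Nx Ny [[e _]|l]; [subst; apply tle_refl; exact Ny|].
  destruct (graft_nodes_cases Nx) as [Lx|[Mx|Ix]].
  - exact (proj2 Lx y Ny).
  - exfalso; exact (maxn_hybr_lt_graft_false Mx Ny l).
  - right; exact (impl_hybr_lt_graft Ix Ny l).
Qed.

Lemma hybr_comparable_graft i x y : nodes (g i) x -> nodes (g i) y ->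
  comparable H x y -> comparable (g i) x y.
Proof. intros Nx Ny [h|h]; [left|right]; apply hybr_tle_graft; auto. Qed.

Lemma hybr_lt_above_graft_nonmax i v b : nodes (g i) v -> ~ maxn (g i) v -> tlt H v b ->
  impl (g i) b \/ exists m, maxn (g i) m /\ tle H m b.
Proof.
  intros Nv NMv h. apply hybr_ltE in h.
  destruct h as [Sv Sb l|k Iv Ib _|k z Sv Ib Lz Le|k r Iv Sb Mr Lr _|
                 k j z r _ Iv Ib Lz Mr Lr _].
  - right. destruct (graft_node_in_T Nv (proj1 Sv)) as [Lv|]; [|contradiction].
    destruct (classic (down T (maxn (g i)) b)) as [[m [Mm Lmb]]|nd].
    + exists m; split; [exact Mm|exact (supp_tle_hybr (maxn_supp Mm) Sb Lmb)].
    + exfalso; apply (proj2 Sb); exists i, v; auto.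
  - left; rewrite <- (graft_node_impl_index Nv Iv); exact Ib.
  - destruct (graft_node_in_T Nv (proj1 Sv)) as [Lv|]; [|contradiction].
    destruct (classic (i = k)) as [e|ne]; [left; subst; exact Ib|right].
    destruct (least_tle_least_down ne Lv Lz Le) as [m [Mm Lmz]].
    exists m; split; [exact Mm|right; apply hybr_ltE].
    exact (HltSuppImpl (maxn_supp Mm) Ib Lz Lmz).
  - right; rewrite (graft_node_impl_index Nv Iv) in Mr.
    exists r; split; [exact Mr|exact (supp_tle_hybr (maxn_supp Mr) Sb Lr)].
  - right; rewrite (graft_node_impl_index Nv Iv) in Mr.
    exists r; split; [exact Mr|right; apply hybr_ltE].
    exact (HltSuppImpl (maxn_supp Mr) Ib Lz Lr).
Qed.

Definition hybr_under (t x : U) : Prop :=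
  (S x /\ tle T x t) \/
  exists i r, impl (g i) x /\ maxn (g i) r /\ tlt (g i) x r /\ tle T r t.

Lemma supp_below_maxn_tle_least i x r z : S x -> maxn (g i) r -> tlt T x r ->
  least (g i) z -> tle T x z.
Proof.
  intros Sx Mr Lxr Lz.
  destruct (tle_common_upper_comparable HT (tlt_tle Lxr)
    (tlt_tle (graft_maxn_above_least Lz Mr))) as [h|[[e _]|Lzx]].
  - exact h.
  - subst; apply tle_refl, (proj1 Sx).
  - exfalso; apply (proj2 Sx); exists i, z; split; [exact Lz|split; [exact Lzx|]].
    intros [a [Ma Lax]].
    assert (Lar : tlt T a r) by exact (tle_tlt_trans (tree_tlt_trans HT) Lax Lxr).
    rewrite (graft_maxn_eq Ma Mr (tlt_tle Lar)) in Lar. exact (tree_tlt_irrefl HT Lar).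
Qed.

Lemma supp_impl_under_comparable t x y i r : S x -> tle T x t -> impl (g i) y ->
  maxn (g i) r -> tlt (g i) y r -> tle T r t -> comparable H x y.
Proof.
  intros Sx Lxt Iy Mr Lyr Lrt.
  destruct (tle_common_upper_comparable HT Lrt Lxt) as [Lrx|[[e _]|Lxr]].
  - apply tlt_comparable_r, hybr_ltE. exact (HltImplSupp Iy Sx Mr Lrx Lyr).
  - subst. apply tlt_comparable_r, hybr_ltE.
    exact (HltImplSupp Iy Sx Mr (tle_refl (proj1 Sx)) Lyr).
  - destruct (graft_least_exists i) as [z Lz].
    apply tlt_comparable, hybr_ltE.
    exact (HltSuppImpl Sx Iy Lz (supp_below_maxn_tle_least Sx Mr Lxr Lz)).
Qed.

Lemma impl_impl_under_lt i j x y ri rj : i <> j ->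
  impl (g i) x -> maxn (g i) ri -> tlt (g i) x ri ->
  impl (g j) y -> maxn (g j) rj -> tlt (g j) y rj -> tle T ri rj -> tlt H x y.
Proof.
  intros ne Ix Mi Lx Iy Mj Ly Lij. assert (Ttr := tree_tlt_trans HT).
  destruct (graft_least_exists j) as [zj Lj].
  assert (lj := graft_maxn_above_least Lj Mj).
  destruct (tle_common_upper_comparable HT Lij (tlt_tle lj)) as [h|[[e _]|h]];
    [| |exfalso]; [apply hybr_ltE..|].
  - exact (HltImplImpl ne Ix Iy Lj Mi h Lx).
  - subst; exact (HltImplImpl ne Ix Iy Lj Mi (tle_refl (graft_least_nodes Lj)) Lx).
  - destruct (graft_least_exists i) as [zi Li].
    assert (li := graft_maxn_above_least Li Mi).
    destruct (tle_common_upper_comparable HT (tlt_tle li) (tlt_tle h)) as [h2|h2].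
    + destruct (least_tle_least_down ne Li Lj h2) as [a [Ma La]].
      assert (Lai : tlt T a ri) by exact (tle_tlt_trans Ttr La h).
      rewrite (graft_maxn_eq Ma Mi (tlt_tle Lai)) in Lai. exact (tree_tlt_irrefl HT Lai).
    + destruct (least_tle_least_down (not_eq_sym ne) Lj Li h2) as [a [Ma La]].
      assert (Laj : tlt T a rj) by exact (tle_tlt_trans Ttr La (tlt_tle_trans Ttr li Lij)).
      rewrite (graft_maxn_eq Ma Mj (tlt_tle Laj)) in Laj. exact (tree_tlt_irrefl HT Laj).
Qed.

Lemma impl_impl_under_comparable t x y i j ri rj :
  impl (g i) x -> maxn (g i) ri -> tlt (g i) x ri -> tle T ri t ->
  impl (g j) y -> maxn (g j) rj -> tlt (g j) y rj -> tle T rj t -> comparable H x y.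
Proof.
  intros Ix Mi Lx Lit Iy Mj Ly Ljt.
  destruct (classic (i = j)) as [e|ne].
  - subst j. assert (e : ri = rj).
    { destruct (tle_common_upper_comparable HT Lit Ljt) as [h|h];
        [exact (graft_maxn_eq Mi Mj h)|exact (eq_sym (graft_maxn_eq Mj Mi h))]. }
    subst rj. apply graft_comparable_hybr with i.
    exact (tle_common_upper_comparable (graft_tree i) (tlt_tle Lx) (tlt_tle Ly)).
  - destruct (tle_common_upper_comparable HT Lit Ljt) as [h|h].
    + exact (tlt_comparable (impl_impl_under_lt ne Ix Mi Lx Iy Mj Ly h)).
    + exact (tlt_comparable_r (impl_impl_under_lt (not_eq_sym ne) Iy Mj Ly Ix Mi Lx h)).
Qed.

Lemma hybr_under_comparable t x y : hybr_under t x -> hybr_under t y -> comparable H x y.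
Proof.
  intros [[Sx Lx]|[i [r [Ix [Mr [Lx Lr]]]]]] [[Sy Ly]|[j [r' [Iy [Mr' [Ly Lr']]]]]].
  - destruct (tle_common_upper_comparable HT Lx Ly) as [h|h];
      [left|right]; apply supp_tle_hybr; auto.
  - exact (supp_impl_under_comparable Sx Lx Iy Mr' Ly Lr').
  - exact (comparable_sym (supp_impl_under_comparable Sy Ly Ix Mr Lx Lr)).
  - exact (impl_impl_under_comparable Ix Mr Lx Lr Iy Mr' Ly Lr').
Qed.

Lemma hybr_under_of_lt_supp x w : tlt H x w -> S w -> hybr_under w x.
Proof.
  intros h Sw. apply hybr_ltE in h.
  destruct h as [Sx _ l|k _ Iw _|k z _ Iw _ _|k r Ix _ Mr Lr l|k j z r _ _ Iw _ _ _ _];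
  try supp_impl_absurd.
  - left; split; [exact Sx|right; exact l].
  - right; exists k, r; auto.
Qed.

Lemma hybr_lt_impl_cases x w k z : tlt H x w -> impl (g k) w -> least (g k) z ->
  (impl (g k) x /\ tlt (g k) x w) \/ hybr_under z x.
Proof.
  intros h Iw Lz. apply hybr_ltE in h.
  destruct h as [_ Sw _|i Ix Iw' l|i z' Sx Iw' Lz' Le|i r _ Sw _ _ _|
                 i j z' r _ Ix Iw' Lz' Mr Lr l];
  try supp_impl_absurd;
  pose proof (impl_index_unique Iw' Iw) as e; subst.
  - left; auto.
  - rewrite (least_unique (graft_tree k) Lz' Lz) in Le. right; left; auto.
  - rewrite (least_unique (graft_tree k) Lz' Lz) in Lr. right; right; exists i, r; auto.
Qed.

Lemma hybr_lt_impl_of_under y x k z : hybr_under z y -> least (g k) z -> impl (g k) x ->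
  tlt H y x.
Proof.
  intros [[Sy Ly]|[i [r [Iy [Mr [Lyr Lr]]]]]] Lz Ix; apply hybr_ltE.
  - exact (HltSuppImpl Sy Ix Lz Ly).
  - destruct (classic (i = k)) as [e|ne]; [subst; exfalso|].
    + exact (tle_tlt_false HT Lr (graft_maxn_above_least Lz Mr)).
    + exact (HltImplImpl ne Iy Ix Lz Mr Lr Lyr).
Qed.

Lemma hybr_lt_pred_comparable x y w : tlt H x w -> tlt H y w -> comparable H x y.
Proof.
  intros hx hy.
  destruct (proj2 (hybr_lt_nodes hx)) as [Sw|[k Iw]].
  - exact (hybr_under_comparable (hybr_under_of_lt_supp hx Sw) (hybr_under_of_lt_supp hy Sw)).
  - destruct (graft_least_exists k) as [z Lz].
    destruct (hybr_lt_impl_cases hx Iw Lz) as [[Ix Lx]|Ux];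
    destruct (hybr_lt_impl_cases hy Iw Lz) as [[Iy Ly]|Uy].
    + apply graft_comparable_hybr with k.
      exact (tle_common_upper_comparable (graft_tree k) (tlt_tle Lx) (tlt_tle Ly)).
    + exact (tlt_comparable_r (hybr_lt_impl_of_under Uy Lz Ix)).
    + exact (tlt_comparable (hybr_lt_impl_of_under Ux Lz Iy)).
    + exact (hybr_under_comparable Ux Uy).
Qed.

Lemma hybr_branch_down_closed B : branch H B -> forall x y, B y -> tle H x y -> B x.
Proof.
  intros HB. apply (branch_down_closed HB).
  - intros x y l; exact (proj1 (hybr_lt_nodes l)).
  - exact hybr_lt_trans.
  - exact hybr_lt_pred_comparable.
Qed.

Lemma branch_hybr_graft_maximal B i C v c : branch H B -> chain (g i) C ->
  (forall x, B x /\ nodes (g i) x -> C x) -> B v -> tlt (g i) v c -> C c -> B c.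
Proof.
  intros HB [_ CC] Sub Bv Lvc Cc.
  destruct (tree_tlt_nodes (graft_tree i) Lvc) as [Nv Nc].
  assert (Hvc := graft_lt_hybr Lvc).
  assert (NMv : ~ maxn (g i) v) by (intros [_ h]; apply h; exists c; exact Lvc).
  apply (branch_extend HB (graft_nodes_hybr Nc)). intros b Bb.
  destruct (proj2 (proj1 HB) b v Bb Bv) as [Hbv|[[e _]|Hvb]].
  - exact (tlt_comparable (tle_tlt_trans hybr_lt_trans Hbv Hvc)).
  - subst; exact (tlt_comparable Hvc).
  - destruct (hybr_lt_above_graft_nonmax Nv NMv Hvb) as [Ib|[m [Mm Hmb]]].
    + exact (graft_comparable_hybr (CC b c (Sub b (conj Bb (proj1 Ib))) Cc)).
    + assert (Cm : C m) by exact (Sub m (conj (hybr_branch_down_closed HB Bb Hmb) (proj1 Mm))).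
      destruct (CC m c Cm Cc) as [[[e _]|l]|Hcm].
      * subst; right; exact Hmb.
      * exfalso; apply (proj2 Mm); exists c; exact l.
      * right; exact (tle_trans hybr_lt_trans (graft_tle_hybr Hcm) Hmb).
Qed.

Lemma branch_hybr_graft B i : branch H B -> (exists v, B v /\ nodes (g i) v) ->
  branch (g i) (fun v => B v /\ nodes (g i) v).
Proof.
  intros HB [v [Bv Nv]]. split; [split|].
  - intros x [_ Nx]; exact Nx.
  - intros x y [Bx Nx] [By Ny].
    exact (hybr_comparable_graft Nx Ny (proj2 (proj1 HB) x y Bx By)).
  - intros C HC Sub c Cc. destruct HC as [CN CC].
    split; [|exact (CN c Cc)].
    destruct (CC c v Cc (Sub v (conj Bv Nv))) as [Lcv|[[e _]|Lvc]].
    + exact (hybr_branch_down_closed HB Bv (graft_tle_hybr Lcv)).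
    + subst; exact Bv.
    + exact (branch_hybr_graft_maximal HB (conj CN CC) Sub Bv Lvc Cc).
Qed.

Lemma branch_hybr_supp_cofinal B : branch H B -> (forall i, bounded_chains (g i)) ->
  forall b, B b -> exists c, B c /\ S c /\ tle H b c.
Proof.
  intros HB Hbc b Bb.
  destruct (proj1 (proj1 HB) b Bb) as [Sb|[i Ib]].
  - exists b; split; [exact Bb|split; [exact Sb|left; split; [reflexivity|left; exact Sb]]].
  - assert (Nb := proj1 Ib).
    assert (HV := branch_hybr_graft HB (ex_intro _ b (conj Bb Nb))).
    destruct (Hbc i _ (proj1 HV) (ex_intro _ b (conj Bb Nb))) as [z [Nz Hz]].
    destruct (branch_upper_bound_maxn HV (graft_tree i) Nz Hz) as [[Bz _] Mz].
    exists z; split; [exact Bz|split; [exact (maxn_supp Mz)|]].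
    exact (graft_tle_hybr (Hz b (conj Bb Nb))).
Qed.

End Hybrid.

Theorem mainTheorem9 (U : Type) (T : tree U) (I : Type) (g : I -> tree U)
  (B : U -> Prop) :
  is_tree T ->
  consistent T g ->
  branch (hybr T g) B ->
  (forall i, (exists v, B v /\ nodes (g i) v) ->
     branch (g i) (fun v => B v /\ nodes (g i) v)) /\
  ((forall i, bounded_chains (g i)) ->
     forall b, B b -> exists c, B c /\ supp T g c /\ tle (hybr T g) b c).
Proof.
  intros HT Hc HB. split.
  - intros i Hi. exact (branch_hybr_graft HT Hc HB Hi).
  - exact (branch_hybr_supp_cofinal HT Hc HB).
Qed.
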